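(* Let $Y$ be a sober space and let $X=\{y\in Y\mid \forall i\in I,\ y\in U_i\Rightarrow y\in V_i\}$ for some family $(U_i,V_i)_{i\in I}$ (of arbitrary cardinality) of pairs of open subsets of $Y$. Then $X$, with the subspace topology, is sober. In particular, every LCS-complete space is sober.
   Context: A space is sober if every irreducible closed subset is the closure of a unique point. A space is LCS-complete if it is homeomorphic to a $G_\delta$ subset (countable intersection of open sets), with the subspace topology, of some locally compact sober space, where locally compact means every point has a neighborhood base of compact saturated sets (no separation assumed). *)

From Stdlib Require Import List.

Definition is_topology {T : Type} (open : (T -> Prop) -> Prop) : Prop :=
  open (fun _ => True) /\
  (forall U V, open U -> open V -> open (fun x => U x /\ V x)) /\
  (forall F : (T -> Prop) -> Prop, (forall U, F U -> open U) ->
     open (fun x => exists U, F U /\ U x)).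

Definition closed {T : Type} (open : (T -> Prop) -> Prop) (C : T -> Prop) : Prop :=
  open (fun x => ~ C x).

Definition closure {T : Type} (open : (T -> Prop) -> Prop) (A : T -> Prop) (x : T) : Prop :=
  forall C, closed open C -> (forall y, A y -> C y) -> C x.

Definition irreducible {T : Type} (open : (T -> Prop) -> Prop) (C : T -> Prop) : Prop :=
  (exists x, C x) /\
  forall C1 C2, closed open C1 -> closed open C2 ->
    (forall x, C x -> C1 x \/ C2 x) ->
    (forall x, C x -> C1 x) \/ (forall x, C x -> C2 x).

Definition sober {T : Type} (open : (T -> Prop) -> Prop) : Prop :=
  forall C, closed open C -> irreducible open C ->
    exists x, (forall y, C y <-> closure open (fun z => z = x) y) /\
      (forall x', (forall y, C y <-> closure open (fun z => z = x') y) -> x' = x).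

Definition subspace_open {Y : Type} (open : (Y -> Prop) -> Prop) (P : Y -> Prop)
  (W : {y : Y | P y} -> Prop) : Prop :=
  exists U, open U /\ forall z, W z <-> U (proj1_sig z).

Definition saturated {T : Type} (open : (T -> Prop) -> Prop) (K : T -> Prop) : Prop :=
  forall y, (forall U, open U -> (forall k, K k -> U k) -> U y) -> K y.

Definition compact {T : Type} (open : (T -> Prop) -> Prop) (K : T -> Prop) : Prop :=
  forall F : (T -> Prop) -> Prop, (forall U, F U -> open U) ->
    (forall k, K k -> exists U, F U /\ U k) ->
    exists l : list (T -> Prop), (forall U, In U l -> F U) /\
      (forall k, K k -> exists U, In U l /\ U k).

Definition nbhd {T : Type} (open : (T -> Prop) -> Prop) (N : T -> Prop) (x : T) : Prop :=
  exists U, open U /\ U x /\ forall y, U y -> N y.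

Definition locally_compact {T : Type} (open : (T -> Prop) -> Prop) : Prop :=
  forall x N, nbhd open N x ->
    exists K, nbhd open K x /\ compact open K /\ saturated open K /\
      (forall y, K y -> N y).

Definition G_delta {T : Type} (open : (T -> Prop) -> Prop) (G : T -> Prop) : Prop :=
  exists W : nat -> T -> Prop, (forall n, open (W n)) /\
    forall y, G y <-> forall n, W n y.

Definition continuous {A B : Type} (openA : (A -> Prop) -> Prop)
  (openB : (B -> Prop) -> Prop) (f : A -> B) : Prop :=
  forall V, openB V -> openA (fun a => V (f a)).

Definition homeomorphic {A B : Type} (openA : (A -> Prop) -> Prop)
  (openB : (B -> Prop) -> Prop) : Prop :=
  exists (f : A -> B) (g : B -> A),
    (forall a, g (f a) = a) /\ (forall b, f (g b) = b) /\
    continuous openA openB f /\ continuous openB openA g.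

Definition LCS_complete {Z : Type} (openZ : (Z -> Prop) -> Prop) : Prop :=
  exists (Y : Type) (openY : (Y -> Prop) -> Prop) (G : Y -> Prop),
    is_topology openY /\ sober openY /\ locally_compact openY /\
    G_delta openY G /\ homeomorphic openZ (subspace_open openY G).

(* If [X] is a subspace of a sober space [Y], the closure in [Y] of an
   irreducible closed subset [A] of [X] has a generic point [y], i.e.
   [cl A = cl {y}]; so [X] is sober as soon as such generic points stay in
   [X].  This holds for [X = {y | forall i, y in U_i -> y in V_i}]: if [y]
   lies in [U_i], the set [A] meets the open set [U_i], at a point which is
   then in [V_i]; and every point of [A] specialises [y], so [y] lies in the
   open set [V_i] as well.  A G_delta set is the special case [U_i = Y], and
   sobriety is invariant under homeomorphism. *)

From Stdlib Require Import Classical FunctionalExtensionality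
  PropExtensionality ProofIrrelevance.

Section Closure.

Variables (T : Type) (op : (T -> Prop) -> Prop).

Lemma open_ext (U U' : T -> Prop) : op U -> (forall y, U y <-> U' y) -> op U'.
Proof.
  intros HU E. replace U' with U; [exact HU |].
  apply functional_extensionality; intro y; apply propositional_extensionality, E.
Qed.

Lemma closed_compl (U : T -> Prop) : op U -> closed op (fun x => ~ U x).
Proof.
  intro HU. apply (open_ext U _ HU). intro y; split; [tauto | apply NNPP].
Qed.

Lemma subset_closure (A : T -> Prop) x : A x -> closure op A x.
Proof. intros Ax C _ HAC. exact (HAC x Ax). Qed.

Lemma closure_mono (A B : T -> Prop) :
  (forall y, A y -> B y) -> forall x, closure op A x -> closure op B x.
Proof.
  intros HAB x Hx C HC HBC. apply Hx; [exact HC |]. intros y Ay; apply HBC, HAB, Ay.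
Qed.

Lemma closure_closed (C : T -> Prop) x : closed op C -> closure op C x -> C x.
Proof. intros HC Hx. exact (Hx C HC (fun y Cy => Cy)). Qed.

Lemma closed_closure (A : T -> Prop) : is_topology op -> closed op (closure op A).
Proof.
  intros [_ [_ Hunion]].
  pose (F := fun W : T -> Prop => exists C, closed op C /\ (forall y, A y -> C y) /\
                                    forall x, W x <-> ~ C x).
  apply (open_ext (fun x => exists W, F W /\ W x)).
  - apply Hunion. intros W [C [HC [_ HW]]].
    apply (open_ext (fun x => ~ C x) _ HC). intro y; rewrite HW; tauto.
  - intro x; split.
    + intros [W [[C [HC [HAC HW]]] Wx]] Hx. apply (proj1 (HW x) Wx), Hx; assumption.
    + intro Hx. apply not_all_ex_not in Hx as [C Hx].
      apply imply_to_and in Hx as [HC Hx]. apply imply_to_and in Hx as [HAC nCx].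
      exists (fun x => ~ C x). split; [exists C; repeat split; tauto | exact nCx].
Qed.

Lemma closure_squeeze (A B : T -> Prop) :
  is_topology op -> (forall y, B y -> A y) -> (forall y, A y -> closure op B y) ->
  forall x, closure op A x <-> closure op B x.
Proof.
  intros Htop HBA HAB x; split.
  - intro Hx. exact (Hx _ (closed_closure B Htop) HAB).
  - exact (closure_mono B A HBA x).
Qed.

Lemma closure_point_open (U : T -> Prop) x y :
  op U -> closure op (fun z => z = y) x -> U x -> U y.
Proof.
  intros HU Hx Ux. apply NNPP; intro nUy.
  exact (Hx _ (closed_compl U HU) (fun z Ez => eq_ind_r (fun w => ~ U w) nUy Ez) Ux).
Qed.

Lemma irreducible_closure (A : T -> Prop) :
  irreducible op A -> irreducible op (closure op A).
Proof.
  intros [[a Aa] Hirr]. split; [exists a; exact (subset_closure A a Aa) |].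
  intros C1 C2 H1 H2 Hcov.
  destruct (Hirr C1 C2 H1 H2) as [HA1 | HA2].
  - intros x Ax. apply Hcov, subset_closure, Ax.
  - left. intros x Hx. exact (Hx C1 H1 HA1).
  - right. intros x Hx. exact (Hx C2 H2 HA2).
Qed.

Lemma generic_point_open_implication (U V A : T -> Prop) y :
  op U -> op V -> (forall a, A a -> U a -> V a) ->
  (forall x, closure op A x <-> closure op (fun z => z = y) x) ->
  U y -> V y.
Proof.
  intros HU HV HAUV Hgen Uy.
  assert (HAU : exists a, A a /\ U a).
  { apply NNPP; intro Hno.
    assert (Hy : closure op A y) by (apply Hgen, subset_closure; reflexivity).
    apply (Hy _ (closed_compl U HU)); [| exact Uy].
    intros a Aa Ua. apply Hno. exists a; tauto. }
  destruct HAU as [a [Aa Ua]].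
  apply (closure_point_open V a y HV); [apply (proj1 (Hgen a)), subset_closure, Aa |].
  exact (HAUV a Aa Ua).
Qed.

End Closure.

Arguments subset_closure {T op A x}.

Section Subspace.

Variables (Y : Type) (openY : (Y -> Prop) -> Prop) (P : Y -> Prop).

Notation X := {y : Y | P y}.
Notation openX := (subspace_open openY P).

Definition val_image (C : X -> Prop) (w : Y) : Prop :=
  exists c, C c /\ proj1_sig c = w.

Lemma closed_subspace_preimage (E : Y -> Prop) :
  closed openY E -> closed openX (fun z => E (proj1_sig z)).
Proof. intro HE. exists (fun w => ~ E w). split; [exact HE | tauto]. Qed.

Lemma subspace_closure (A : X -> Prop) z :
  closure openX A z <-> closure openY (val_image A) (proj1_sig z).
Proof.
  split.
  - intros Hz E HE HAE. apply (Hz _ (closed_subspace_preimage E HE)).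
    intros c Ac. apply HAE. exists c; split; [exact Ac | reflexivity].
  - intros Hz C [O [HO HOC]] HAC.
    assert (nOz : ~ O (proj1_sig z)).
    { apply (Hz _ (closed_compl Y openY O HO)).
      intros w [c [Ac <-]] Oc. exact (proj2 (HOC c) Oc (HAC c Ac)). }
    apply NNPP. intro nCz. exact (nOz (proj1 (HOC z) nCz)).
Qed.

Lemma subspace_closure_point (x z : X) :
  closure openX (fun u => u = x) z <->
  closure openY (fun w => w = proj1_sig x) (proj1_sig z).
Proof.
  rewrite subspace_closure. split; apply closure_mono.
  - intros w [c [-> <-]]. reflexivity.
  - intros w ->. exists x; split; reflexivity.
Qed.

Lemma irreducible_val_image (C : X -> Prop) :
  irreducible openX C -> irreducible openY (val_image C).
Proof.
  intros [[c Cc] Hirr]. split; [exists (proj1_sig c), c; split; [exact Cc | reflexivity] |].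
  intros C1 C2 H1 H2 Hcov.
  destruct (Hirr _ _ (closed_subspace_preimage C1 H1) (closed_subspace_preimage C2 H2))
    as [HC1 | HC2].
  - intros u Cu. apply Hcov. exists u; split; [exact Cu | reflexivity].
  - left. intros w [u [Cu <-]]. exact (HC1 u Cu).
  - right. intros w [u [Cu <-]]. exact (HC2 u Cu).
Qed.

Hypothesis topY : is_topology openY.
Hypothesis soberY : sober openY.

(* A closed irreducible [C] of [X] is [X ∩ D] for the closed irreducible
   [D = cl_Y C]; the generic point of [D] lies in [X] by [generic_closed], and
   a generic point [x'] of [C] in [X] is one of [D] since
   [{x'} ⊆ C ⊆ cl_Y {x'}]. *)
Lemma sober_subspace :
  (forall (A : Y -> Prop) y, (forall a, A a -> P a) ->
     (forall w, closure openY A w <-> closure openY (fun u => u = y) w) -> P y) ->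
  sober openX.
Proof.
  intros generic_closed C HC HCirr.
  pose (D := closure openY (val_image C)).
  assert (HCD : forall z, C z <-> D (proj1_sig z)).
  { intro z. unfold D. rewrite <- subspace_closure. split; [exact subset_closure |].
    exact (closure_closed X openX C z HC). }
  destruct (soberY D (closed_closure Y openY _ topY)
              (irreducible_closure Y openY _ (irreducible_val_image C HCirr)))
    as [y [Hy Hyuniq]].
  assert (Py : P y).
  { apply (generic_closed (val_image C)); [| exact Hy].
    intros w [c [_ <-]]. exact (proj2_sig c). }
  exists (exist P y Py). split.
  - intro z. rewrite subspace_closure_point, HCD. apply Hy.
  - intros [y' Py'] Hy'.
    assert (y' = y) as ->; [| f_equal; apply proof_irrelevance].
    apply Hyuniq. apply closure_squeeze; [exact topY | |].
    + intros w ->. exists (exist P y' Py'). split; [| reflexivity].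
      apply Hy', subset_closure. reflexivity.
    + intros w [c [Cc <-]]. exact (proj1 (subspace_closure_point _ c) (proj1 (Hy' c) Cc)).
Qed.

End Subspace.

Lemma sober_homeomorphic {A B : Type} (openA : (A -> Prop) -> Prop)
  (openB : (B -> Prop) -> Prop) :
  homeomorphic openA openB -> sober openB -> sober openA.
Proof.
  intros [f [g [gf [fg [cf cg]]]]] soberB.
  assert (closure_f : forall (S : A -> Prop) a,
             closure openA S a <-> closure openB (fun b => S (g b)) (f a)).
  { intros S a; split.
    - intros Ha E HE HSE. apply (Ha (fun a => E (f a)) (cf _ HE)).
      intros a' Sa'. apply HSE. rewrite gf. exact Sa'.
    - intros Hb E HE HSE. rewrite <- (gf a).
      exact (Hb (fun b => E (g b)) (cg _ HE) (fun b Sb => HSE (g b) Sb)). }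
  assert (point_g : forall a b, (g b = a) <-> (b = f a)).
  { intros a b; split; [intros <-; symmetry; apply fg | intros ->; apply gf]. }
  assert (closure_point : forall a a', closure openA (fun z => z = a) a' <->
                                       closure openB (fun z => z = f a) (f a')).
  { intros a a'. rewrite closure_f. split; apply closure_mono; intro b; apply point_g. }
  intros C HC [[c Cc] HCirr].
  destruct (soberB (fun b => C (g b)) (cg _ HC)) as [s [Hs Hsuniq]].
  { split; [exists (f c); rewrite gf; exact Cc |].
    intros C1 C2 H1 H2 Hcov.
    destruct (HCirr _ _ (cf _ H1) (cf _ H2)) as [HC1 | HC2].
    - intros a Ca. apply Hcov. rewrite gf. exact Ca.
    - left. intros b Cb. rewrite <- (fg b). exact (HC1 _ Cb).
    - right. intros b Cb. rewrite <- (fg b). exact (HC2 _ Cb). }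
  exists (g s). split.
  - intro a. rewrite closure_point, fg, <- Hs, gf. reflexivity.
  - intros a' Ha'. rewrite <- (gf a'). f_equal. apply Hsuniq. intro b.
    rewrite Ha', closure_point, !fg. reflexivity.
Qed.

Theorem proposition7p1 :
  (forall (Y : Type) (openY : (Y -> Prop) -> Prop),
      is_topology openY -> sober openY ->
      forall (I : Type) (U V : I -> Y -> Prop),
        (forall i, openY (U i)) -> (forall i, openY (V i)) ->
        sober (subspace_open openY (fun y => forall i, U i y -> V i y)))
  /\
  (forall (Z : Type) (openZ : (Z -> Prop) -> Prop),
      is_topology openZ -> LCS_complete openZ -> sober openZ).
Proof.
  split.
  - intros Y openY topY soberY I U V HU HV.
    apply sober_subspace; [exact topY | exact soberY |].
    intros A y HA Hgen i.
    exact (generic_point_open_implication Y openY (U i) (V i) A y (HU i) (HV i)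
             (fun a Aa => HA a Aa i) Hgen).
  - intros Z openZ _ [Y [openY [G [topY [soberY [_ [[W [HW HG]] homeo]]]]]]].
    apply (sober_homeomorphic _ _ homeo).
    apply sober_subspace; [exact topY | exact soberY |].
    intros A y HA Hgen. apply HG. intro n.
    apply (generic_point_open_implication Y openY (fun _ => True) (W n) A y
             (proj1 topY) (HW n)); [| exact Hgen | exact I].
    intros a Aa _. exact (proj1 (HG a) (HA a Aa) n).
Qed.
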